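(* Suppose $p_j,p_{j'}$ (with $j<j'$, on segments $s_i,s_{i'}$ respectively) are two consecutive reflection points of $\mathrm{OPT}$ in its orientation, i.e. no other reflection point is visited between them. Then $p_j$ and $p_{j'}$ are not both left reflection points and not both right reflection points. Furthermore, if $s_i$ is to the left of $s_{i'}$, then $p_j$ is a right reflection point and $p_{j'}$ is a left reflection point (and the opposite holds if $s_{i'}$ is to the left of $s_i$).
   Context: Instance: vertical line segments $s_1,\dots,s_n$ in $\mathbb{R}^2$, each of length $1$, with pairwise distinct $x$-coordinates. A tour is a cyclic sequence of points $p_1,\dots,p_\sigma$, each on some segment, with every segment containing at least one $p_j$; the straight segments joining consecutive points are legs. $\mathrm{OPT}$ is a fixed minimum-cost tour, oriented $p_1\to p_2\to\cdots$, with no two consecutive points on the same segment (no vertical legs) and not self-crossing. A point $p_j$ of $\mathrm{OPT}$ on segment $s$ is a left (resp. right) reflection point if both of its incident legs lie in the half-plane $x\le x(s)$ (resp. $x\ge x(s)$); a reflection point is a left or right reflection point. *)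

From HB Require Import structures.
From mathcomp Require Import all_boot all_order all_algebra.
From mathcomp Require Import reals.
Set Implicit Arguments. Unset Strict Implicit. Unset Printing Implicit Defensive.
Import Order.TTheory GRing.Theory Num.Theory.
Local Open Scope ring_scope.

Section Defs.
Variable R : realType.
Definition point := (R * R)%type.

Definition on_seg (n : nat) (sx sy : 'I_n -> R) (i : 'I_n) (q : point) : Prop :=
  q.1 = sx i /\ sy i <= q.2 <= sy i + 1.

Definition dist (a b : point) : R :=
  Num.sqrt ((a.1 - b.1) ^+ 2 + (a.2 - b.2) ^+ 2).

(* A tour is a (cyclic) sequence of points p_0, ..., p_(size t - 1);
   indices are taken cyclically (0-based). *)
Definition pt (t : seq point) (j : nat) : point := nth (0, 0) t (j %% size t).
Definition nxt (t : seq point) (j : nat) : point := pt t j.+1.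
Definition prv (t : seq point) (j : nat) : point := pt t (j + size t).-1.

Definition is_tour (n : nat) (sx sy : 'I_n -> R) (t : seq point) : Prop :=
  (forall q, q \in t -> exists i, on_seg sx sy i q) /\
  (forall i, exists2 q, q \in t & on_seg sx sy i q).

Definition cost (t : seq point) : R :=
  \sum_(j < size t) dist (pt t j) (nxt t j).

Definition is_opt_tour (n : nat) (sx sy : 'I_n -> R) (t : seq point) : Prop :=
  is_tour sx sy t /\ forall t', is_tour sx sy t' -> cost t <= cost t'.

Definition in_leg (a b q : point) : Prop :=
  exists2 l : R, 0 <= l <= 1 &
    q = ((1 - l) * a.1 + l * b.1, (1 - l) * a.2 + l * b.2).

Definition no_vertical_legs (n : nat) (sx sy : 'I_n -> R) (t : seq point) : Prop :=
  forall j, (j < size t)%N -> forall i,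
    ~ (on_seg sx sy i (pt t j) /\ on_seg sx sy i (nxt t j)).

Definition orient (a b c : point) : R :=
  (b.1 - a.1) * (c.2 - a.2) - (b.2 - a.2) * (c.1 - a.1).
Definition legs_cross (a b c d : point) : Prop :=
  orient a b c * orient a b d < 0 /\ orient c d a * orient c d b < 0.

Definition not_self_crossing (t : seq point) : Prop :=
  forall j k, (j < size t)%N -> (k < size t)%N ->
    ~ legs_cross (pt t j) (nxt t j) (pt t k) (nxt t k).

Definition left_refl (n : nat) (sx sy : 'I_n -> R) (t : seq point) (j : nat) : Prop :=
  exists i, on_seg sx sy i (pt t j) /\
    forall q, in_leg (prv t j) (pt t j) q \/ in_leg (pt t j) (nxt t j) q ->
      q.1 <= sx i.
Definition right_refl (n : nat) (sx sy : 'I_n -> R) (t : seq point) (j : nat) : Prop :=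
  exists i, on_seg sx sy i (pt t j) /\
    forall q, in_leg (prv t j) (pt t j) q \/ in_leg (pt t j) (nxt t j) q ->
      sx i <= q.1.
Definition refl (n : nat) (sx sy : 'I_n -> R) (t : seq point) (j : nat) : Prop :=
  left_refl sx sy t j \/ right_refl sx sy t j.
End Defs.

From HB Require Import structures.
From mathcomp Require Import all_boot all_order all_algebra.
From mathcomp Require Import reals.
From mathcomp Require Import lra.

Set Implicit Arguments. Unset Strict Implicit. Unset Printing Implicit Defensive.
Import Order.TTheory GRing.Theory Num.Theory.
Local Open Scope ring_scope.

(* Between two consecutive reflection points the x-coordinate along the tour
   is strictly monotone: at a point that is not a reflection point the two
   incident legs leave its segment on opposite sides, so the direction of
   travel in x never changes, and the first leg is not vertical since
   distinct segments have distinct x-coordinates.  Hence if the tour leaves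
   p_j to the right, it reaches p_j' from the left: p_j is a right and p_j'
   a left reflection point, and s_i lies to the left of s_i'. *)

Section Run.
Variables (R : realDomainType) (f : nat -> R) (j j' : nat).

Lemma run_increasing :
  f j < f j.+1 ->
  (forall k, (j < k < j')%N -> f k.-1 < f k -> f k < f k.+1) ->
  forall k, (j < k <= j')%N -> f k.-1 < f k /\ f j < f k.
Proof.
move=> f_jump f_pass; elim=> [|k IHk] /andP[hjk hkj'] //.
have [<-|neq_jk] := eqVneq j k; first by split.
have ltjk : (j < k)%N by rewrite ltn_neqAle neq_jk -ltnS.
have /IHk [lt_pred lt_jk] : (j < k <= j')%N by rewrite ltjk ltnW.
have lt_succ : f k < f k.+1 by apply: f_pass; rewrite ?ltjk.
by split => //; apply: lt_trans lt_succ.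
Qed.

End Run.

Section Legs.
Variable R : realType.
Implicit Types a b q : point R.

Lemma in_leg_start a b : in_leg a b a.
Proof.
exists 0; first by rewrite lexx ler01.
by case: a => ? ? /=; rewrite subr0 !mul1r !mul0r !addr0.
Qed.

Lemma in_leg_end a b : in_leg a b b.
Proof.
exists 1; first by rewrite lexx ler01.
by case: b => ? ? /=; rewrite subrr !mul1r !mul0r !add0r.
Qed.

Lemma in_leg_x_le a b q s : a.1 <= s -> b.1 <= s -> in_leg a b q -> q.1 <= s.
Proof. by move=> ha hb [l /andP[l_ge0 l_le1] ->] /=; nra. Qed.

Lemma in_leg_x_ge a b q s : s <= a.1 -> s <= b.1 -> in_leg a b q -> s <= q.1.
Proof. by move=> ha hb [l /andP[l_ge0 l_le1] ->] /=; nra. Qed.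

End Legs.

Section Tour.
Variables (R : realType) (n : nat) (sx sy : 'I_n -> R) (t : seq (point R)).
Hypotheses (t_tour : is_tour sx sy t) (t_nonempty : (0 < size t)%N).

Lemma prvE k : (0 < k)%N -> prv t k = pt t k.-1.
Proof. by case: k => // k _; rewrite /prv addSn /pt modnDr. Qed.

Lemma pt_on_seg k : exists i, on_seg sx sy i (pt t k).
Proof. by apply: t_tour.1; rewrite /pt mem_nth // ltn_pmod. Qed.

Lemma left_reflE k :
  left_refl sx sy t k <-> (prv t k).1 <= (pt t k).1 /\ (nxt t k).1 <= (pt t k).1.
Proof.
split=> [[i [[-> _] in_half]]|[le_prv le_nxt]].
  by split; apply: in_half; [left; apply: in_leg_start|right; apply: in_leg_end].
have [i [x_i y_i]] := pt_on_seg k.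
by exists i; split=> // q; rewrite -x_i; case; apply: in_leg_x_le.
Qed.

Lemma right_reflE k :
  right_refl sx sy t k <-> (pt t k).1 <= (prv t k).1 /\ (pt t k).1 <= (nxt t k).1.
Proof.
split=> [[i [[-> _] in_half]]|[ge_prv ge_nxt]].
  by split; apply: in_half; [left; apply: in_leg_start|right; apply: in_leg_end].
have [i [x_i y_i]] := pt_on_seg k.
by exists i; split=> // q; rewrite -x_i; case; apply: in_leg_x_ge.
Qed.

Lemma not_refl_pass k : ~ refl sx sy t k ->
  ((prv t k).1 < (pt t k).1 -> (pt t k).1 < (nxt t k).1) /\
  ((pt t k).1 < (prv t k).1 -> (nxt t k).1 < (pt t k).1).
Proof.
rewrite /refl left_reflE right_reflE => not_refl.
split=> lt_prv; rewrite ltNge; apply/negP => le_nxt; apply: not_refl.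
  by left; split; [apply: ltW|].
by right; split; [apply: ltW|].
Qed.

Variables j j' : nat.
Hypotheses (lt_jj' : (j < j')%N)
  (no_refl_between : forall k, (j < k)%N -> (k < j')%N -> ~ refl sx sy t k).

Lemma refl_run_up : (pt t j).1 < (pt t j.+1).1 ->
  [/\ ~ left_refl sx sy t j, ~ right_refl sx sy t j' & (pt t j).1 < (pt t j').1].
Proof.
move=> up; have j'_gt0 : (0 < j')%N by apply: leq_ltn_trans lt_jj'.
have [lt_prv lt_run] : (pt t j'.-1).1 < (pt t j').1 /\ (pt t j).1 < (pt t j').1.
  apply: (@run_increasing _ (fun k => (pt t k).1) j j' up); last by rewrite lt_jj' leqnn.
  move=> k /andP[hjk hkj']; have k_gt0 : (0 < k)%N by apply: leq_ltn_trans hjk.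
  by rewrite -(prvE k_gt0); apply: (not_refl_pass (no_refl_between hjk hkj')).1.
split=> //; first by rewrite left_reflE /nxt => -[_]; rewrite leNgt up.
by rewrite right_reflE (prvE j'_gt0) => -[]; rewrite leNgt lt_prv.
Qed.

Lemma refl_run_down : (pt t j.+1).1 < (pt t j).1 ->
  [/\ ~ right_refl sx sy t j, ~ left_refl sx sy t j' & (pt t j').1 < (pt t j).1].
Proof.
move=> down; have j'_gt0 : (0 < j')%N by apply: leq_ltn_trans lt_jj'.
have [lt_prv lt_run] : - (pt t j'.-1).1 < - (pt t j').1 /\ - (pt t j).1 < - (pt t j').1.
  apply: (@run_increasing _ (fun k => - (pt t k).1) j j'); rewrite ?ltrN2 ?lt_jj' ?leqnn //.
  move=> k /andP[hjk hkj']; have k_gt0 : (0 < k)%N by apply: leq_ltn_trans hjk.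
  by rewrite !ltrN2 -(prvE k_gt0); apply: (not_refl_pass (no_refl_between hjk hkj')).2.
rewrite !ltrN2 in lt_prv lt_run.
split=> //; first by rewrite right_reflE /nxt => -[_]; rewrite leNgt down.
by rewrite left_reflE (prvE j'_gt0) => -[]; rewrite leNgt lt_prv.
Qed.

End Tour.

Lemma nxt_x_neq (R : realType) (n : nat) (sx sy : 'I_n -> R) (t : seq (point R)) j :
  injective sx -> is_tour sx sy t -> no_vertical_legs sx sy t ->
  (j < size t)%N -> (pt t j).1 != (nxt t j).1.
Proof.
move=> sx_inj t_tour no_vert ltj.
have t_nonempty : (0 < size t)%N by apply: leq_ltn_trans ltj.
have [i on_i] := pt_on_seg t_tour t_nonempty j.
have [i2 on_i2] := pt_on_seg t_tour t_nonempty j.+1.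
apply/eqP => eq_x; have eq_i : i = i2 by apply: sx_inj; rewrite -on_i.1 -on_i2.1.
by apply: (no_vert j ltj i); rewrite {2}eq_i.
Qed.

Theorem lemma6 (R : realType) (n : nat) (sx sy : 'I_n -> R)
  (t : seq (point R)) :
  injective sx ->
  is_opt_tour sx sy t ->
  no_vertical_legs sx sy t ->
  not_self_crossing t ->
  forall (j j' : nat) (i i' : 'I_n),
    (j < j')%N -> (j' < size t)%N ->
    on_seg sx sy i (pt t j) -> on_seg sx sy i' (pt t j') ->
    refl sx sy t j -> refl sx sy t j' ->
    (forall k, (j < k)%N -> (k < j')%N -> ~ refl sx sy t k) ->
    [/\ ~ (left_refl sx sy t j /\ left_refl sx sy t j'),
        ~ (right_refl sx sy t j /\ right_refl sx sy t j'),
        (sx i < sx i' -> right_refl sx sy t j /\ left_refl sx sy t j') &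
        (sx i' < sx i -> left_refl sx sy t j /\ right_refl sx sy t j')].
Proof.
move=> sx_inj [t_tour _] no_vert _ j j' i i' lt_jj' lt_j'
  [x_i _] [x_i' _] refl_j refl_j' no_refl_between.
have lt_j : (j < size t)%N by apply: ltn_trans lt_j'.
have t_nonempty : (0 < size t)%N by apply: leq_ltn_trans lt_j.
rewrite -x_i -x_i'; rewrite /refl in refl_j refl_j'.
case: (ltrgtP (pt t j).1 (nxt t j).1) (nxt_x_neq sx_inj t_tour no_vert lt_j)
  => [up _|down _|//].
- have [not_l not_r lt_x] := refl_run_up t_tour t_nonempty lt_jj' no_refl_between up.
  by split; try tauto; move=> /lt_gtF; rewrite lt_x.
- have [not_r not_l lt_x] := refl_run_down t_tour t_nonempty lt_jj' no_refl_between down.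
  by split; try tauto; move=> /lt_gtF; rewrite lt_x.
Qed.
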